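(* Let $Q$ be a quantity space over a field $K$ and let $\mathsf{C}\in Q/{\sim}$. Then $\mathsf{C}$, with addition defined by $x+y=(\rho+\sigma)\cdot u$ whenever $u$ is a unit quantity for $\mathsf{C}$, $x=\rho\cdot u$ and $y=\sigma\cdot u$, and with scalar multiplication $(\lambda,x)\mapsto\lambda\cdot x$ inherited from $Q$, is a one-dimensional vector space over $K$.
   Context: A scalable monoid over a (unital, associative) ring $R$ is a monoid $X$ (identity $1_X$, product written $xy$) together with a map $R\times X\to X$, $(\alpha,x)\mapsto\alpha\cdot x$, such that $1\cdot x=x$, $\alpha\cdot(\beta\cdot x)=\alpha\beta\cdot x$ and $\alpha\cdot(xy)=(\alpha\cdot x)y=x(\alpha\cdot y)$. A quantity space over a field $K$ is a commutative scalable monoid $Q$ over $K$ for which there exists a basis, i.e. a finite set $\{e_1,\ldots,e_n\}$ of invertible elements of $Q$ such that every $x\in Q$ has a unique expansion $x=\mu\cdot\prod_{i=1}^n e_i^{k_i}$ with $\mu\in K$ and $k_i\in\mathbb{Z}$. On $Q$, $x\sim y$ iff $\alpha\cdot x=\beta\cdot y$ for some $\alpha,\beta\in K$; $Q/{\sim}$ is the set of equivalence classes (dimensions). A unit quantity for a class $\mathsf{C}$ is some $u\in\mathsf{C}$ such that every $x\in\mathsf{C}$ equals $\lambda\cdot u$ for some $\lambda\in K$, and $\lambda\cdot u=\lambda'\cdot u$ implies $\lambda=\lambda'$. (The sum $x+y$ so defined does not depend on the choice of unit quantity $u$.) *)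

From mathcomp Require Import all_boot all_order all_algebra.
Set Implicit Arguments. Unset Strict Implicit. Unset Printing Implicit Defensive.
Import GRing.Theory.
Local Open Scope ring_scope.

Section QS.
Variable K : nzRingType.
Variable X : Type.
Variables (mul : X -> X -> X) (one : X) (scale : K -> X -> X).

Definition scalable_monoid : Prop :=
  (forall x y z, mul x (mul y z) = mul (mul x y) z) /\
  (forall x, mul one x = x) /\
  (forall x, mul x one = x) /\
  (forall x, scale 1 x = x) /\
  (forall a b x, scale a (scale b x) = scale (a * b) x) /\
  (forall a x y, scale a (mul x y) = mul (scale a x) y) /\
  (forall a x y, scale a (mul x y) = mul x (scale a y)).

Definition zpow (e einv : X) (k : int) : X :=
  match k with
  | Posz n => iter n (mul e) one
  | Negz n => iter n.+1 (mul einv) one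
  end.

Definition quantity_space : Prop :=
  [/\ scalable_monoid,
      (forall x y, mul x y = mul y x) &
      exists (n : nat) (e einv : 'I_n -> X),
        (forall i, mul (e i) (einv i) = one) /\
        forall x : X, exists! p : K * {ffun 'I_n -> int},
          x = scale p.1 (\big[mul/one]_(i < n) zpow (e i) (einv i) (p.2 i))].

Definition qsim (x y : X) : Prop := exists a b : K, scale a x = scale b y.

Definition qclass (c : X) : X -> Prop := fun x => qsim x c.

Definition unit_quantity (C : X -> Prop) (u : X) : Prop :=
  [/\ C u,
      (forall x, C x -> exists l : K, x = scale l u) &
      (forall l l' : K, scale l u = scale l' u -> l = l')].

Definition class_add_spec (C : X -> Prop) (add : X -> X -> X) : Prop :=
  forall u, unit_quantity C u -> forall rho sigma : K,
    add (scale rho u) (scale sigma u) = scale (rho + sigma) u.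

Definition vector_space_on (P : X -> Prop) (add : X -> X -> X) : Prop :=
  (forall x y, P x -> P y -> P (add x y)) /\
  (forall a x, P x -> P (scale a x)) /\
  (forall x y z, P x -> P y -> P z -> add x (add y z) = add (add x y) z) /\
  (forall x y, P x -> P y -> add x y = add y x) /\
  (exists z, [/\ P z, (forall x, P x -> add z x = x) &
               (forall x, P x -> exists y, P y /\ add x y = z)]) /\
  (forall x, P x -> scale 1 x = x) /\
  (forall a b x, P x -> scale a (scale b x) = scale (a * b) x) /\
  (forall a x y, P x -> P y -> scale a (add x y) = add (scale a x) (scale a y)) /\
  (forall a b x, P x -> scale (a + b) x = add (scale a x) (scale b x)).

Definition one_dimensional_on (P : X -> Prop) : Prop :=
  exists v, P v /\ forall x, P x -> exists! l : K, x = scale l v.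

End QS.

(** By uniqueness of the expansions, [x ~ c] holds exactly when [x] and [c]
    have the same monomial [m], so the class of [c] is the line [K . m], on
    which [l |-> l . m] is injective.  Every unit quantity is some [t . m], and
    the prescribed addition is [l . m + l' . m = (l + l') . m] whatever [t] is;
    hence the class is a copy of the regular module [K] with basis [m]. *)
From mathcomp Require Import all_boot all_order all_algebra.
From Stdlib Require Import ClassicalEpsilon.
Set Implicit Arguments. Unset Strict Implicit. Unset Printing Implicit Defensive.
Local Open Scope ring_scope.
Import GRing.Theory.

Section ScaledLine.
Variables (K : nzRingType) (Q : Type) (scale : K -> Q -> Q) (m : Q).
Hypothesis scaleA : forall a b x, scale a (scale b x) = scale (a * b) x.
Hypothesis scale1 : forall x, scale 1 x = x.
Hypothesis scale_inj : forall l l', scale l m = scale l' m -> l = l'.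
Variable C : Q -> Prop.
Hypothesis lineP : forall x, C x <-> exists l, x = scale l m.

Lemma line_scale l : C (scale l m).
Proof. by apply/lineP; exists l. Qed.

Lemma line_gen : C m.
Proof. by rewrite -[m]scale1; apply: line_scale. Qed.

Lemma unit_quantity_gen : unit_quantity scale C m.
Proof. by split; [exact: line_gen | move=> x /lineP | exact: scale_inj]. Qed.

Definition line_coord (x : Q) : K :=
  epsilon (inhabits 0) (fun l => x = scale l m).

Lemma line_coordK l : line_coord (scale l m) = l.
Proof.
apply: scale_inj; symmetry.
exact: (epsilon_spec (inhabits 0) (fun l' => scale l m = scale l' m) (ex_intro _ l erefl)).
Qed.

Definition line_add (x y : Q) : Q := scale (line_coord x + line_coord y) m.

Lemma line_add_spec : class_add_spec scale C line_add.
Proof.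
move=> u [/lineP [t ->] _ _] r s.
by rewrite /line_add !scaleA !line_coordK mulrDl.
Qed.

Section AnyAddition.
Variable add : Q -> Q -> Q.
Hypothesis add_spec : class_add_spec scale C add.

Lemma line_addE r s : add (scale r m) (scale s m) = scale (r + s) m.
Proof. exact: add_spec unit_quantity_gen r s. Qed.

Lemma vector_space_line : vector_space_on scale C add.
Proof.
split; first by move=> x y /lineP [r ->] /lineP [s ->]; rewrite line_addE; apply: line_scale.
split; first by move=> a x /lineP [r ->]; rewrite scaleA; apply: line_scale.
split; first by move=> x y z /lineP [r ->] /lineP [s ->] /lineP [t ->]; rewrite !line_addE addrA.
split; first by move=> x y /lineP [r ->] /lineP [s ->]; rewrite !line_addE addrC.
split.
  exists (scale 0 m); split; first exact: line_scale.
    by move=> x /lineP [r ->]; rewrite line_addE add0r.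
  move=> x /lineP [r ->]; exists (scale (- r) m).
  by split; [apply: line_scale | rewrite line_addE subrr].
split; first by move=> x _; rewrite scale1.
split; first by move=> a b x _; rewrite scaleA.
split; first by move=> a x y /lineP [r ->] /lineP [s ->]; rewrite line_addE !scaleA line_addE mulrDr.
by move=> a b x /lineP [r ->]; rewrite !scaleA line_addE mulrDl.
Qed.

End AnyAddition.

Lemma one_dimensional_line : one_dimensional_on scale C.
Proof.
exists m; split; first exact: line_gen.
by move=> x /lineP [l ->]; exists l; split=> // l' /scale_inj.
Qed.

End ScaledLine.

Section Expansion.
Variables (K : nzRingType) (Q : Type) (mul : Q -> Q -> Q) (one : Q).
Variables (scale : K -> Q -> Q) (n : nat) (e einv : 'I_n -> Q).
Hypothesis scaleA : forall a b x, scale a (scale b x) = scale (a * b) x.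

Definition monomial (k : {ffun 'I_n -> int}) : Q :=
  \big[mul/one]_(i < n) zpow mul one (e i) (einv i) (k i).

Hypothesis expansion : forall x, exists! p : K * {ffun 'I_n -> int},
  x = scale p.1 (monomial p.2).

Lemma expansion_inj l l' k k' :
  scale l (monomial k) = scale l' (monomial k') -> l = l' /\ k = k'.
Proof.
move=> E; have [p [_ p_uniq]] := expansion (scale l (monomial k)).
by have := p_uniq (l', k') E; rewrite (p_uniq (l, k) erefl) => -[-> ->].
Qed.

Lemma qclass_monomialP l k x :
  qclass scale (scale l (monomial k)) x <-> exists l', x = scale l' (monomial k).
Proof.
split=> [[a [b E]] | [l' ->]]; last by exists 0, 0; rewrite !scaleA !mul0r.
have [[nu kx] [/= Ex _]] := expansion x.
rewrite Ex !scaleA in E; have [_ Ek] := expansion_inj E.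
by exists nu; rewrite Ex Ek.
Qed.

End Expansion.

Section QuantitySpace.
Variables (K : nzRingType) (Q : Type) (mul : Q -> Q -> Q) (one : Q).
Variable scale : K -> Q -> Q.
Hypothesis HQ : quantity_space mul one scale.

Lemma quantity_scaleA a b x : scale a (scale b x) = scale (a * b) x.
Proof. by case: HQ => [[_ [_ [_ [_ [-> _]]]]]]. Qed.

Lemma quantity_scale1 x : scale 1 x = x.
Proof. by case: HQ => [[_ [_ [_ [-> _]]]]]. Qed.

Lemma qclass_line c : exists m,
  (forall l l', scale l m = scale l' m -> l = l') /\
  (forall x, qclass scale c x <-> exists l, x = scale l m).
Proof.
case: HQ => _ _ [n [e [einv [_ expansion]]]].
have [[mu k] [/= -> _]] := expansion c.
exists (monomial mul one e einv k); split.
  by move=> l l' /(expansion_inj expansion) [].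
exact: qclass_monomialP quantity_scaleA expansion mu k.
Qed.

End QuantitySpace.

Theorem proposition3p9 (K : fieldType) (Q : Type) (mul : Q -> Q -> Q) (one : Q)
    (scale : K -> Q -> Q) (HQ : quantity_space mul one scale) (c : Q) :
  (exists add : Q -> Q -> Q, class_add_spec scale (qclass scale c) add) /\
  (forall add : Q -> Q -> Q, class_add_spec scale (qclass scale c) add ->
     vector_space_on scale (qclass scale c) add /\
     one_dimensional_on scale (qclass scale c)).
Proof.
have [m [scale_inj lineP]] := qclass_line HQ c.
have scaleA := quantity_scaleA HQ; have scale1 := quantity_scale1 HQ.
split; first by exists (line_add scale m); apply: line_add_spec.
move=> add add_spec; split.
  exact: (vector_space_line scaleA scale1 scale_inj lineP add_spec).
exact: (one_dimensional_line scale1 scale_inj lineP).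
Qed.
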